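(* Let $x_0<\dots<x_n$ and $\hat x_0<\dots<\hat x_n$ be real numbers with $\hat x_0=x_0$, $\hat x_n=x_n$, let $\mathbf{y}\in\mathbb{R}^{n+1}$, $z_k=z_k(\mathbf{x},\hat{\mathbf{x}})$, $\hat c_k:=(\hat x_{k-1}+\hat x_k)/2$ for $1\le k\le n$, and $\hat{\mathbf{v}}:=\{\hat x_k:0\le k\le n\}\cup\{\hat c_k:1\le k\le n\}$. Then \[ \max_{x_0\le t\le x_n}|E(t;\mathbf{y},\mathbf{z})|\le\Lambda(\hat{\mathbf{v}})\max_{1\le k\le n}|E(\hat c_k;\mathbf{y},\mathbf{z})|. \]
   Context: $\lambda_k(\mathbf{x}):=1/\prod_{j\neq k}(x_k-x_j)$; $z_k(\mathbf{x},\hat{\mathbf{x}}):=(\lambda_k(\mathbf{x})-\lambda_k(\hat{\mathbf{x}}))/\lambda_k(\hat{\mathbf{x}})$. For $\mathbf{v}\in\mathbb{R}^{n+1}$, $P_{\mathbf{v}}$ is the polynomial of degree $\le n$ with $P_{\mathbf{v}}(\hat x_k)=v_k$; $E(t;\mathbf{y},\mathbf{z}):=P_{\mathbf{y}\mathbf{z}}(t)-P_{\mathbf{y}}(t)P_{\mathbf{z}}(t)$ with $(\mathbf{yz})_k=y_kz_k$. For a finite set of distinct points $\mathbf{u}\subset[x_0,x_n]$, $\Lambda(\mathbf{u}):=\max_{t\in[x_0,x_n]}\sum_{u\in\mathbf{u}}|\ell_u(t)|$, where $\ell_u$ are the Lagrange polynomials for polynomial interpolation at the points of $\mathbf{u}$.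 *)

From HB Require Import structures.
From mathcomp Require Import all_boot all_order all_algebra.
From mathcomp Require Import classical_sets reals.
Set Implicit Arguments. Unset Strict Implicit. Unset Printing Implicit Defensive.
Import Order.TTheory GRing.Theory Num.Theory.
Local Open Scope ring_scope.
Local Open Scope classical_set_scope.

Section Defs.
Variable R : realType.

Definition lam (n : nat) (x : 'I_n.+1 -> R) (k : 'I_n.+1) : R :=
  (\prod_(j < n.+1 | j != k) (x k - x j))^-1.

Definition zvec (n : nat) (x xh : 'I_n.+1 -> R) (k : 'I_n.+1) : R :=
  (lam x k - lam xh k) / lam xh k.

Definition Pint (n : nat) (xh : 'I_n.+1 -> R) (v : 'I_n.+1 -> R) (t : R) : R :=
  \sum_(k < n.+1) v k * \prod_(j < n.+1 | j != k) ((t - xh j) / (xh k - xh j)).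

Definition Eerr (n : nat) (xh y z : 'I_n.+1 -> R) (t : R) : R :=
  Pint xh (fun k => y k * z k) t - Pint xh y t * Pint xh z t.

Definition lagr (s : seq R) (u t : R) : R :=
  \prod_(w <- s | w != u) ((t - w) / (u - w)).

Definition Lebesgue (a b : R) (s : seq R) : R :=
  sup [set \sum_(u <- s) `|lagr s u t| | t in [set t : R | a <= t <= b]].

(* midpoints hat c_k = (xh_{k-1} + xh_k)/2 for k = 1..n, indexed by k-1 : 'I_n *)
Definition cmid (n : nat) (xh : 'I_n.+1 -> R) (k : 'I_n) : R :=
  (xh (inord k) + xh (inord k.+1)) / 2.

Definition vhat (n : nat) (xh : 'I_n.+1 -> R) : seq R :=
  [seq xh k | k <- enum 'I_n.+1] ++ [seq cmid xh k | k <- enum 'I_n].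

Definition strictly_incr (n : nat) (x : 'I_n.+1 -> R) : Prop :=
  forall i j : 'I_n.+1, (i < j)%N -> x i < x j.

End Defs.

From mathcomp Require Import all_boot all_order all_algebra.
From mathcomp Require Import reals.
From mathcomp Require Import zify lra.
Import Order.TTheory GRing.Theory Num.Theory.
Local Open Scope ring_scope.
Set Implicit Arguments. Unset Strict Implicit.

(* For any y and z, E(.; y, z) is a polynomial of degree at most 2n that
   vanishes at the nodes xh_k.  The 2n + 1 distinct points of vhat therefore
   interpolate it exactly, so Lagrange interpolation on vhat bounds |E(t)| by
   the Lebesgue constant of vhat times the largest value of |E| on vhat, which
   is attained at the midpoints. *)

Section LagrangeInterpolation.
Variable R : realType.
Implicit Types (s : seq R) (u w t a b : R).

Lemma size_sum_le (I : Type) (r : seq I) (P : pred I) (F : I -> {poly R}) m :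
  (forall i, P i -> (size (F i) <= m)%N) -> (size (\sum_(i <- r | P i) F i)%R <= m)%N.
Proof.
move=> sizeF; apply: (big_ind (fun q : {poly R} => size q <= m)%N) => //.
- by rewrite size_poly0.
- by move=> ? ? ? ?; apply: leq_trans (size_polyD _ _) _; rewrite geq_max; apply/andP.
Qed.

Definition lagr_poly s u : {poly R} :=
  (\prod_(w <- s | w != u) (u - w)^-1) *: \prod_(w <- s | w != u) ('X - w%:P).

Lemma lagr_polyE s u t : (lagr_poly s u).[t] = lagr s u t.
Proof.
rewrite /lagr_poly hornerZ horner_prod /lagr -big_split /=.
by apply: eq_bigr => w _; rewrite hornerXsubC mulrC.
Qed.

Lemma size_lagr_poly s u : u \in s -> (size (lagr_poly s u) <= size s)%N.
Proof.
move=> us; apply: leq_trans (size_scale_leq _ _) _.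
rewrite -big_filter size_prod_XsubC size_filter -(count_predC (pred1 u) s).
by rewrite -add1n leq_add2r -has_count has_pred1.
Qed.

Lemma lagr_id s u : lagr s u u = 1.
Proof. by rewrite /lagr big1 // => w wu; rewrite divff // subr_eq0 eq_sym. Qed.

Lemma lagr_eq0 s u w : w \in s -> u != w -> lagr s u w = 0.
Proof.
move=> ws uw; apply/eqP; rewrite /lagr prodf_seq_eq0; apply/hasP; exists w => //.
by rewrite eq_sym uw subrr mul0r eqxx.
Qed.

Lemma lagrange_interp s (p : {poly R}) t : uniq s -> (size p <= size s)%N ->
  p.[t] = \sum_(u <- s) p.[u] * lagr s u t.
Proof.
move=> us sp; set q := \sum_(u <- s) p.[u] *: lagr_poly s u.
suff pq : p = q by rewrite {1}pq horner_sum; apply: eq_bigr => u _; rewrite hornerZ lagr_polyE.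
have size_q : (size q <= size s)%N.
  rewrite /q big_seq; apply: size_sum_le => u su.
  exact: leq_trans (size_scale_leq _ _) (size_lagr_poly su).
apply/eqP; rewrite eq_sym -subr_eq0; apply/eqP; apply: (roots_geq_poly_eq0 _ us).
- apply/allP => w ws; rewrite /root hornerD hornerN horner_sum (bigD1_seq w) //=.
  rewrite hornerZ lagr_polyE lagr_id mulr1 big1 ?addr0 ?subrr // => u uw.
  by rewrite hornerZ lagr_polyE lagr_eq0 ?mulr0.
- by apply: leq_trans (size_polyD _ _) _; rewrite size_polyN geq_max size_q.
Qed.

(* Any bound uniform in t would do: it only shows that the set whose supremum
   defines the Lebesgue constant is bounded above. *)
Lemma normr_lagr_le s u a b t : a <= t <= b ->
  `|lagr s u t| <= \prod_(w <- s | w != u) ((`|a| + `|b| + `|w|) * `|u - w|^-1).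
Proof.
move=> /andP[ha hb].
have normt : `|t| <= `|a| + `|b|.
  have := ler_norm b; have := ler_norm (- a); rewrite normrN => na nb.
  have := normr_ge0 a; have := normr_ge0 b => a0 b0.
  by case: (lerP 0 t) => t0; [rewrite ger0_norm | rewrite ltr0_norm]; lra.
rewrite /lagr normr_prod; apply: ler_prod => w _; apply/andP; split => //.
rewrite normrM normfV; apply: ler_wpM2r; first by rewrite invr_ge0.
by apply: le_trans (ler_normB _ _) _; lra.
Qed.

Lemma sum_lagr_le_Lebesgue s a b t : a <= t <= b ->
  \sum_(u <- s) `|lagr s u t| <= Lebesgue a b s.
Proof.
move=> ht; apply: ub_le_sup; last by exists t.
exists (\sum_(u <- s) \prod_(w <- s | w != u) ((`|a| + `|b| + `|w|) * `|u - w|^-1)).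
by move=> _ [t' ht' <-]; apply: ler_sum => u _; apply: normr_lagr_le.
Qed.

Lemma interp_norm_le_Lebesgue s (p : {poly R}) (M a b t : R) :
  uniq s -> (size p <= size s)%N -> 0 <= M -> (forall u, u \in s -> `|p.[u]| <= M) ->
  a <= t <= b -> `|p.[t]| <= Lebesgue a b s * M.
Proof.
move=> us sp M0 pM ht; rewrite (lagrange_interp t us sp).
apply: le_trans (ler_norm_sum _ _ _) _.
apply: (@le_trans _ _ (\sum_(u <- s) `|lagr s u t| * M)); last first.
  by rewrite -mulr_suml ler_wpM2r ?sum_lagr_le_Lebesgue.
rewrite !big_seq; apply: ler_sum => u su.
by rewrite normrM mulrC; apply: ler_wpM2l => //; apply: pM.
Qed.

End LagrangeInterpolation.

Section InterpolationAtNodes.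
Variables (R : realType) (n : nat) (xh : 'I_n.+1 -> R).
Hypothesis xh_inj : injective xh.

Definition nodes : seq R := [seq xh k | k <- enum 'I_n.+1].

Lemma size_nodes : size nodes = n.+1.
Proof. by rewrite size_map size_enum_ord. Qed.

Lemma lagr_nodes (k : 'I_n.+1) t :
  lagr nodes (xh k) t = \prod_(j < n.+1 | j != k) ((t - xh j) / (xh k - xh j)).
Proof. by rewrite /lagr big_map big_enum_cond; apply: eq_bigl => j; rewrite inj_eq. Qed.

Lemma PintE (v : 'I_n.+1 -> R) t : Pint xh v t = \sum_(k < n.+1) v k * lagr nodes (xh k) t.
Proof. by apply: eq_bigr => k _; rewrite lagr_nodes. Qed.

Lemma Pint_node (v : 'I_n.+1 -> R) i : Pint xh v (xh i) = v i.
Proof.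
rewrite PintE (bigD1 i) //= lagr_id mulr1 big1 ?addr0 // => k ki.
by rewrite lagr_eq0 ?mulr0 ?map_f ?mem_enum // inj_eq.
Qed.

Definition Pint_poly (v : 'I_n.+1 -> R) : {poly R} :=
  \sum_(k < n.+1) v k *: lagr_poly nodes (xh k).

Lemma Pint_polyE (v : 'I_n.+1 -> R) t : (Pint_poly v).[t] = Pint xh v t.
Proof.
rewrite PintE horner_sum; apply: eq_bigr => k _.
by rewrite hornerZ lagr_polyE.
Qed.

Lemma size_Pint_poly (v : 'I_n.+1 -> R) : (size (Pint_poly v) <= n.+1)%N.
Proof.
apply: size_sum_le => k _; apply: leq_trans (size_scale_leq _ _) _.
by rewrite -size_nodes size_lagr_poly ?map_f ?mem_enum.
Qed.

Definition Eerr_poly (y z : 'I_n.+1 -> R) : {poly R} :=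
  Pint_poly (fun k => y k * z k) - Pint_poly y * Pint_poly z.

Lemma Eerr_polyE (y z : 'I_n.+1 -> R) t : (Eerr_poly y z).[t] = Eerr xh y z t.
Proof. by rewrite hornerD hornerN hornerM !Pint_polyE. Qed.

Lemma size_Eerr_poly (y z : 'I_n.+1 -> R) : (size (Eerr_poly y z) <= (n + n).+1)%N.
Proof.
apply: leq_trans (size_polyD _ _) _; rewrite size_polyN geq_max.
rewrite (leq_trans (size_Pint_poly _)) ?ltnS ?leq_addr //=.
apply: leq_trans (size_polyMleq _ _) _.
by have := size_Pint_poly y; have := size_Pint_poly z; lia.
Qed.

Lemma Eerr_node (y z : 'I_n.+1 -> R) i : Eerr xh y z (xh i) = 0.
Proof. by rewrite /Eerr !Pint_node subrr. Qed.

End InterpolationAtNodes.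

Lemma incr_ord_inj (R : realType) (m : nat) (f : 'I_m -> R) :
  (forall i j : 'I_m, (i < j)%N -> f i < f j) -> injective f.
Proof.
move=> f_incr i j fij; apply/eqP; case: (ltngtP i j) => [ij | ji | /val_inj -> //].
- by have := f_incr _ _ ij; rewrite fij ltxx.
- by have := f_incr _ _ ji; rewrite fij ltxx.
Qed.

Section Midpoints.
Variables (R : realType) (n : nat) (xh : 'I_n.+1 -> R).
Hypothesis xh_incr : strictly_incr xh.

Lemma strictly_incr_le (i j : 'I_n.+1) : (i <= j)%N -> xh i <= xh j.
Proof. by rewrite leq_eqVlt => /orP[/eqP/val_inj -> // | /xh_incr/ltW]. Qed.

Lemma cmid_bounds (k : 'I_n) : xh (inord k) < cmid xh k < xh (inord k.+1).
Proof.
have : xh (inord k) < xh (inord k.+1).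
  by apply: xh_incr; rewrite !inordK // ltnS // ltnW.
by rewrite /cmid => ?; apply/andP; split; lra.
Qed.

Lemma cmid_lt_node (k : 'I_n) (j : 'I_n.+1) : (k < j)%N -> cmid xh k < xh j.
Proof.
move=> kj; have /andP[_ ck] := cmid_bounds k.
by apply: lt_le_trans ck (strictly_incr_le _); rewrite inordK ?ltnS.
Qed.

Lemma node_lt_cmid (k : 'I_n) (j : 'I_n.+1) : (j <= k)%N -> xh j < cmid xh k.
Proof.
move=> jk; have /andP[kc _] := cmid_bounds k.
by apply: le_lt_trans kc; apply: strictly_incr_le; rewrite inordK // ltnS ltnW.
Qed.

Lemma cmid_incr (k l : 'I_n) : (k < l)%N -> cmid xh k < cmid xh l.
Proof.
move=> kl; have ln : (l < n.+1)%N by rewrite ltnS ltnW.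
apply: (@lt_trans _ _ (xh (inord l))).
- by apply: cmid_lt_node; rewrite inordK.
- by apply: node_lt_cmid; rewrite inordK.
Qed.

Lemma size_vhat : size (vhat xh) = (n + n).+1.
Proof. by rewrite size_cat !size_map -!enumT !size_enum_ord addSn. Qed.

Lemma uniq_vhat : uniq (vhat xh).
Proof.
have xh_inj := incr_ord_inj xh_incr; have cmid_inj := incr_ord_inj cmid_incr.
rewrite cat_uniq !map_inj_uniq // -!enumT !enum_uniq andbT /=.
apply/hasPn => _ /mapP[k _ ->]; apply/mapP => -[j _ ckj].
by case: (leqP j k) => [/node_lt_cmid | /cmid_lt_node]; rewrite ckj ltxx.
Qed.

End Midpoints.

Theorem lemma3 (R : realType) (n : nat) (x xh y : 'I_n.+1 -> R) :
  strictly_incr x -> strictly_incr xh ->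
  xh ord0 = x ord0 -> xh ord_max = x ord_max ->
  forall t : R, x ord0 <= t <= x ord_max ->
    `|Eerr xh y (zvec x xh) t|
      <= Lebesgue (x ord0) (x ord_max) (vhat xh)
         * \big[Num.max/0]_(k < n) `|Eerr xh y (zvec x xh) (cmid xh k)|.
Proof.
move=> _ xh_incr _ _ t ht; have xh_inj := incr_ord_inj xh_incr.
set E := Eerr xh y (zvec x xh); set M := \big[Num.max/0]_(k < n) `|E (cmid xh k)|.
have M0 : 0 <= M by apply: (big_ind (fun r => 0 <= r)) => // a b a0 _; rewrite le_max a0.
rewrite /E -(Eerr_polyE xh_inj); apply: interp_norm_le_Lebesgue ht => //.
- exact: uniq_vhat.
- by rewrite size_vhat size_Eerr_poly.
- move=> _ /[!mem_cat] /orP[] /mapP[k _ ->]; rewrite (Eerr_polyE xh_inj).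
  + by rewrite Eerr_node // normr0.
  + exact: (le_bigmax 0 (fun k => `|E (cmid xh k)|) k).
Qed.
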